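(* Let $L>0$, $N\ge 5$ an integer, $h=L/N$, $x_i=y_i=-\tfrac L2+ih$ for $i=0,\dots,N-1$, $\tau>0$, $p,q\in\mathbb{R}$. Let $\Gamma$ be an $L$-periodic function (extended periodically, i.e. $\Gamma(\xi)$ is evaluated as $\Gamma(((\xi+\tfrac L2)\bmod L)-\tfrac L2)$) with $\Gamma(-\xi)=\overline{\Gamma(\xi)}$, and write $\Gamma_{i,j}=\Gamma(x_i-y_j)$. Let $C$ be the $N\times N$ real symmetric circulant matrix of the fourth-order central difference second derivative with periodic boundary conditions, $(Cf)_i=\frac{-f_{i+2}+16f_{i+1}-30f_i+16f_{i-1}-f_{i-2}}{12h^2}$ (indices mod $N$), and for an $N\times N$ array $U$ define $(\mathfrak{D}_H U)_{i,j}=\sum_k C_{ik}U_{k,j}-\sum_k C_{jk}U_{i,k}$. Given an $N\times N$ Hermitian array $U^0$ ($U^0_{i,j}=\overline{U^0_{j,i}}$) and a real antisymmetric array $\Phi^{-1/2}$, define for $n\ge 0$ \[ \Phi^{n+\frac12}_{i,j}=2\bigl(U^n_{i,i}-U^n_{j,j}\bigr)-\Phi^{n-\frac12}_{i,j}, \] $U^{n+\frac12}$ as the solution of \[ U^{n+\frac12}_{i,j}-\tfrac{ip\tau}{2}(\mathfrak{D}_H U^{n+\frac12})_{i,j}-\tfrac{iq\tau}{2}\Phi^{n+\frac12}_{i,j}U^{n+\frac12}_{i,j}=U^n_{i,j}+\tfrac{iq\tau}{2}\Gamma_{i,j}\Phi^{n+\frac12}_{i,j}, \] and $U^{n+1}_{i,j}=2U^{n+\frac12}_{i,j}-U^n_{i,j}$.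 Let \[ I_0[U^n]=h^2\sum_{i=0}^{N-1}\sum_{j=0}^{N-1}\bigl|\Gamma_{i,j}+U^n_{i,j}\bigr|^2,\qquad I_1[U^n]=h\sum_{i=0}^{N-1}U^n_{i,i}. \] Then $I_0[U^{n+1}]=I_0[U^n]$ and $I_1[U^{n+1}]=I_1[U^n]$ for all $n\ge 0$.
   Context: This is the fully discrete relaxation–Crank–Nicolson scheme (fourth-order finite differences in space with periodic boundary conditions) for the equation $i\partial_t u+p(\Delta_x-\Delta_y)u+q(u(x,x,t)-u(y,y,t))(\Gamma(x-y)+u)=0$ on $[-\tfrac L2,\tfrac L2]^2$; $U^n_{i,j}$ approximates $u(x_i,y_j,n\tau)$ and $\Phi^{n+1/2}_{i,j}$ approximates $u(x_i,x_i,t)-u(y_j,y_j,t)$ at $t=(n+\tfrac12)\tau$. *)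

From HB Require Import structures.
From mathcomp Require Import all_boot all_order all_algebra.
From mathcomp Require Import complex.
Unset Printing Implicit Defensive.
Import Order.TTheory GRing.Theory Num.Theory.
Local Open Scope ring_scope.
Local Open Scope complex_scope.

Definition hstep {R : rcfType} (L : R) (N : nat) : R := L / N%:R.

Definition xgrid {R : rcfType} (L : R) (N : nat) (i : 'I_N) : R :=
  - (L / 2) + i%:R * hstep L N.

Definition Gam {R : rcfType} (L : R) (N : nat) (Gamma : R -> R[i]) : 'M[R[i]]_N :=
  \matrix_(i, j) Gamma (xgrid L N i - xgrid L N j).

(* fourth-order periodic second-difference matrix C:
   (Cf)_i = (-f_{i+2} + 16 f_{i+1} - 30 f_i + 16 f_{i-1} - f_{i-2}) / (12 h^2),
   indices mod N; entry C_{ik} is the coefficient of f_k in (Cf)_i. *)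
Definition ind (R : rcfType) (b : bool) : R := if b then 1 else 0.
Definition Cmat {R : rcfType} (L : R) (N : nat) : 'M[R]_N :=
  \matrix_(i, k)
   ((- ind R (k == ((i + 2) %% N)%N :> nat)
     + 16 * ind R (k == ((i + 1) %% N)%N :> nat)
     - 30 * ind R (k == i :> nat)
     + 16 * ind R (k == ((i + (N - 1)) %% N)%N :> nat)
     - ind R (k == ((i + (N - 2)) %% N)%N :> nat))
    / (12 * hstep L N ^+ 2)).

Definition DH {R : rcfType} (L : R) (N : nat) (U : 'M[R[i]]_N) : 'M[R[i]]_N :=
  \matrix_(i, j) (\sum_k ((Cmat L N i k)%:C * U k j)
                  - \sum_k ((Cmat L N j k)%:C * U i k)).

(* I_0[U] = h^2 sum_{i,j} |Gamma_{i,j} + U_{i,j}|^2 (a real number, stated in R[i]) *)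
Definition I0 {R : rcfType} (L : R) (N : nat) (Gamma : R -> R[i]) (U : 'M[R[i]]_N) : R[i] :=
  (hstep L N ^+ 2)%:C *
  \sum_i \sum_j ((Gam L N Gamma i j + U i j) * (Gam L N Gamma i j + U i j)^*).

Definition I1 {R : rcfType} (L : R) (N : nat) (U : 'M[R[i]]_N) : R[i] :=
  (hstep L N)%:C * \sum_i U i i.

From HB Require Import structures.
From mathcomp Require Import all_boot all_order all_algebra.
From mathcomp Require Import complex ring zify.
Set Implicit Arguments.
Unset Strict Implicit.
Unset Printing Implicit Defensive.

(* Write the implicit half step as  U^{n+1/2} - U^n = i T (Gamma + U^{n+1/2}),  where
   T X = (p tau/2) [C, X] + (q tau/2) Phi^{n+1/2} o X  (o the entrywise product): the
   term [C, Gamma] vanishes because C and Gamma are both circulant, hence commute.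
   If Phi^{n+1/2} is real and antisymmetric, T is self-adjoint for the Frobenius
   inner product and traceless.  With c = Gamma + U^{n+1/2} we then have
   Gamma + U^{n+1} = c + i T c  and  Gamma + U^n = c - i T c, two vectors of equal
   norm (the cross terms cancel), which is the conservation of I_0; and
   tr U^{n+1} - tr U^n = 2 i tr (T c) = 0 gives I_1.  The hypotheses on Phi are
   propagated by induction together with the Hermitian symmetry of U^n: the
   anti-Hermitian part V of U^{n+1/2} solves V = i T V, and since <V, V> is real
   while <i T V, V> is imaginary, V = 0. *)

Import Order.TTheory GRing.Theory Num.Theory.
Local Open Scope ring_scope.
Local Open Scope sesquilinear_scope.

Definition circulant {T : Type} {n : nat} (c : 'I_n.+1 -> T) : 'M[T]_n.+1 :=
  \matrix_(i, j) c (i - j).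

Lemma map_circulant {T S : Type} {n : nat} (f : T -> S) (c : 'I_n.+1 -> T) :
  map_mx f (circulant c) = circulant (f \o c).
Proof. by apply/matrixP => i j; rewrite !mxE. Qed.

(* Reindex the sum by the involution [k |-> i + j - k]. *)
Lemma circulant_mulC (R : comPzRingType) (n : nat) (a b : 'I_n.+1 -> R) :
  circulant a *m circulant b = circulant b *m circulant a.
Proof.
apply/matrixP => i j; rewrite !mxE (reindex_inj (inv_inj (subKr (i + j)))) /=.
apply: eq_bigr => k _; rewrite !mxE mulrC; congr (b _ * a _).
  by rewrite addrAC addrK.
by rewrite opprB opprD addrCA addNKr.
Qed.

Section Frobenius.
Variables (C : numClosedFieldType) (m n : nat).
Implicit Types A B X : 'M[C]_(m, n).

Definition frobenius A B : C := \sum_i \sum_j A i j * (B i j)^*.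

Lemma frobeniusE A B : frobenius A B = \tr (A *m B ^t*).
Proof.
apply: eq_bigr => i _; rewrite mxE; apply: eq_bigr => j _.
by rewrite !mxE.
Qed.

Lemma conj_frobenius A B : (frobenius A B)^* = frobenius B A.
Proof.
rewrite rmorph_sum; apply: eq_bigr => i _; rewrite rmorph_sum.
by apply: eq_bigr => j _; rewrite rmorphM /= conjCK mulrC.
Qed.

Lemma frobeniusZl a A B : frobenius (a *: A) B = a * frobenius A B.
Proof.
rewrite mulr_sumr; apply: eq_bigr => i _; rewrite mulr_sumr.
by apply: eq_bigr => j _; rewrite mxE mulrA.
Qed.

Lemma frobeniusDl A B X : frobenius (A + B) X = frobenius A X + frobenius B X.
Proof.
rewrite -big_split; apply: eq_bigr => i _; rewrite -big_split.
by apply: eq_bigr => j _; rewrite mxE mulrDl.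
Qed.

Lemma frobeniusDr A B X : frobenius X (A + B) = frobenius X A + frobenius X B.
Proof. by rewrite -conj_frobenius frobeniusDl rmorphD /= !conj_frobenius. Qed.

Lemma frobeniusZr a A B : frobenius A (a *: B) = a^* * frobenius A B.
Proof. by rewrite -conj_frobenius frobeniusZl rmorphM /= conj_frobenius. Qed.

Lemma frobenius_eq0 A : (frobenius A A == 0) = (A == 0).
Proof.
apply/idP/eqP => [|->]; last first.
  apply/eqP; rewrite /frobenius big1 // => i _.
  by rewrite big1 // => j _; rewrite mxE mul0r.
rewrite /frobenius psumr_eq0 => [/allP A0|i _]; last first.
  by apply: sumr_ge0 => j _; apply: mul_conjC_ge0.
apply/matrixP => i j; move/(_ i (mem_index_enum _)): A0.
rewrite psumr_eq0 => [/allP/(_ j (mem_index_enum _))|j' _]; last first.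
  exact: mul_conjC_ge0.
by rewrite mul_conjC_eq0 mxE => /eqP.
Qed.

Lemma frobenius_addsub A X :
  frobenius (A + X) (A + X) - frobenius (A - X) (A - X)
  = (frobenius A X + frobenius X A) *+ 2.
Proof.
rewrite -sumrB -big_split -sumrMnl; apply: eq_bigr => i _.
rewrite -sumrB -big_split -sumrMnl; apply: eq_bigr => j _.
by rewrite !mxE !(rmorphD, rmorphB) /=; ring.
Qed.

Definition selfadjoint (T : 'M[C]_(m, n) -> 'M[C]_(m, n)) :=
  forall A B, frobenius (T A) B = frobenius A (T B).

Variable T : 'M[C]_(m, n) -> 'M[C]_(m, n).
Hypothesis T_selfadjoint : selfadjoint T.

Lemma selfadjoint_real A : (frobenius (T A) A)^* = frobenius (T A) A.
Proof. by rewrite conj_frobenius T_selfadjoint. Qed.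

(* [frobenius A A] is real, while [frobenius ('i *: T A) A] is imaginary. *)
Lemma selfadjoint_iZ_eq0 A : A = 'i *: T A -> A = 0.
Proof.
move=> AE; apply/eqP; rewrite -frobenius_eq0.
have AA : frobenius A A = 'i * frobenius (T A) A by rewrite {1}AE frobeniusZl.
have := conj_frobenius A A; rewrite AA rmorphM /= conjCi selfadjoint_real mulNr.
by move/eqP; rewrite eq_sym -subr_eq0 opprK -mulr2n mulrn_eq0.
Qed.

Lemma selfadjoint_cayley A :
  frobenius (A + 'i *: T A) (A + 'i *: T A)
  = frobenius (A - 'i *: T A) (A - 'i *: T A).
Proof.
apply/eqP; rewrite -subr_eq0 frobenius_addsub frobeniusZr frobeniusZl.
by rewrite -T_selfadjoint conjCi mulNr addNr mul0rn.
Qed.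

End Frobenius.

Lemma selfadjoint_lincomb (C : numClosedFieldType) (m n : nat) (a b : C)
    (T1 T2 : 'M[C]_(m, n) -> 'M[C]_(m, n)) :
  a \is Num.real -> b \is Num.real -> selfadjoint T1 -> selfadjoint T2 ->
  selfadjoint (fun A => a *: T1 A + b *: T2 A).
Proof.
move=> /conj_Creal ar /conj_Creal br T1sa T2sa A B.
by rewrite frobeniusDl frobeniusDr !frobeniusZl !frobeniusZr ar br T1sa T2sa.
Qed.

Section MatrixOperators.
Variables (C : numClosedFieldType) (n : nat).
Implicit Types A B H P : 'M[C]_n.

Lemma trmxC_mul A B : (A *m B)^t* = B^t* *m A^t*.
Proof. by rewrite trmx_mul map_mxM. Qed.

Lemma trmxC_add A B : (A + B)^t* = A^t* + B^t*.
Proof. by rewrite linearD map_mxD. Qed.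

Lemma trmxC_sub A B : (A - B)^t* = A^t* - B^t*.
Proof. by rewrite linearB map_mxB. Qed.

Lemma trmxC_scale c A : (c *: A)^t* = c^* *: A^t*.
Proof. by rewrite linearZ map_mxZ. Qed.

Definition ad_mx H A := H *m A - A *m H.

Lemma ad_mxD H A B : ad_mx H (A + B) = ad_mx H A + ad_mx H B.
Proof. by rewrite /ad_mx mulmxDr mulmxDl opprD addrACA. Qed.

Lemma ad_mxB H A B : ad_mx H (A - B) = ad_mx H A - ad_mx H B.
Proof.
rewrite /ad_mx mulmxBr mulmxBl !opprB addrACA [RHS]addrACA.
by rewrite [- (A *m H) + _]addrC.
Qed.

Lemma ad_mx_selfadjoint H : H^t* = H -> selfadjoint (ad_mx H).
Proof.
move=> HH A B; rewrite !frobeniusE /ad_mx trmxC_sub !trmxC_mul HH.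
rewrite mulmxBl mulmxBr !raddfB /= -!mulmxA mxtrace_mulC.
by rewrite !mulmxA.
Qed.

Lemma trmxC_ad_mx H A : H^t* = H -> (ad_mx H A)^t* = - ad_mx H (A^t*).
Proof. by move=> HH; rewrite trmxC_sub !trmxC_mul HH opprB. Qed.

Lemma mxtrace_ad_mx H A : \tr (ad_mx H A) = 0.
Proof. by rewrite /ad_mx raddfB /= mxtrace_mulC subrr. Qed.

Lemma hadamard_selfadjoint P : P \is a realmx -> selfadjoint (map2_mx *%R P).
Proof.
move=> /mxOverP Pr A B; apply: eq_bigr => i _; apply: eq_bigr => j _.
by rewrite !mxE rmorphM /= (conj_Creal (Pr i j)) mulrCA mulrA.
Qed.

Lemma trmxC_hadamard P A : P \is a realmx -> P^T = - P ->
  (map2_mx *%R P A)^t* = - map2_mx *%R P (A^t*).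
Proof.
move=> /mxOverP Pr /matrixP Pskew; apply/matrixP => i j.
have := Pskew i j; rewrite !mxE => Pji.
by rewrite rmorphM /= (conj_Creal (Pr j i)) Pji mulNr.
Qed.

Lemma mxtrace_hadamard P A : P^T = - P -> \tr (map2_mx *%R P A) = 0.
Proof.
move=> /matrixP Pskew; rewrite /mxtrace big1 // => i _.
have := Pskew i i; rewrite !mxE => /eqP; rewrite -addr_eq0 -mulr2n mulrn_eq0.
by move=> /eqP->; rewrite mul0r.
Qed.

End MatrixOperators.

Section SchemeOperator.
Variables (C : numClosedFieldType) (n : nat) (a b : C) (H P : 'M[C]_n).

Definition scheme_op X := a *: ad_mx H X + b *: map2_mx *%R P X.

Lemma scheme_opB : {morph scheme_op : X Y / X - Y}.
Proof.
move=> X Y; have hdB : map2_mx *%R P (X - Y) = map2_mx *%R P X - map2_mx *%R P Y.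
  by apply/matrixP => i j; rewrite !mxE mulrBr.
by rewrite /scheme_op ad_mxB hdB (scalerBr a) (scalerBr b) opprD addrACA.
Qed.

Hypotheses (a_real : a \is Num.real) (b_real : b \is Num.real).
Hypotheses (H_herm : H^t* = H) (P_real : P \is a realmx) (P_skew : P^T = - P).

Lemma scheme_op_selfadjoint : selfadjoint scheme_op.
Proof.
exact: selfadjoint_lincomb a_real b_real (ad_mx_selfadjoint H_herm)
  (hadamard_selfadjoint P_real).
Qed.

Lemma trmxC_scheme_op X : (scheme_op X)^t* = - scheme_op (X^t*).
Proof.
rewrite trmxC_add !trmxC_scale (conj_Creal a_real) (conj_Creal b_real).
by rewrite trmxC_ad_mx // trmxC_hadamard // !scalerN opprD.
Qed.

Lemma mxtrace_scheme_op X : \tr (scheme_op X) = 0.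
Proof.
by rewrite mxtraceD !mxtraceZ mxtrace_ad_mx mxtrace_hadamard // !mulr0 addr0.
Qed.

End SchemeOperator.

Section CrankNicolsonStep.
Variables (C : numClosedFieldType) (n : nat) (T : 'M[C]_n -> 'M[C]_n).
Variables (G U0 W U1 : 'M[C]_n).
Hypotheses (step : W - U0 = 'i *: T (G + W)) (next : U1 = W *+ 2 - U0).

Lemma cn_step_frobenius :
  selfadjoint T -> frobenius (G + U1) (G + U1) = frobenius (G + U0) (G + U0).
Proof.
move=> T_sa; have -> : G + U1 = (G + W) + (W - U0) by rewrite next mulr2n -!addrA.
have -> : G + U0 = (G + W) - (W - U0) by rewrite opprB addrCA addrK addrC.
by rewrite step; apply: selfadjoint_cayley.
Qed.

Lemma cn_step_trace : (forall X, \tr (T X) = 0) -> \tr U1 = \tr U0.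
Proof.
move=> trT; apply/eqP; rewrite -subr_eq0 -raddfB /=.
have -> : U1 - U0 = (W - U0) *+ 2 by rewrite next !mulr2n addrACA addrA.
by rewrite raddfMn /= step mxtraceZ trT mulr0 mul0rn.
Qed.

Lemma cn_step_hermitian : selfadjoint T -> {morph T : A B / A - B} ->
  (forall A, (T A)^t* = - T (A^t*)) -> G^t* = G -> U0^t* = U0 -> U1^t* = U1.
Proof.
move=> T_sa TB TC GH U0H.
have stepC : W^t* - U0 = 'i *: T (G + W^t*).
  rewrite -{1}U0H -trmxC_sub step trmxC_scale conjCi TC trmxC_add GH.
  by rewrite scaleNr scalerN opprK.
have /selfadjoint_iZ_eq0 : W - W^t* = 'i *: T (W - W^t*).
  transitivity ((W - U0) - (W^t* - U0)); first by rewrite opprB subrKA.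
  by rewrite step stepC -scalerBr -TB opprD addrACA subrr add0r.
move=> /(_ T_sa) /eqP; rewrite subr_eq0 => /eqP WH.
by rewrite next trmxC_sub mulr2n trmxC_add -WH U0H.
Qed.

End CrankNicolsonStep.

Lemma scheme_step_mx (C : comPzRingType) (n : nat) (c a b : C)
    (D G P U W : 'M[C]_n) :
  (forall i j, W i j - c * a * D i j - c * b * P i j * W i j
               = U i j + c * b * G i j * P i j) ->
  W - U = c *: (a *: D + b *: map2_mx *%R P (G + W)).
Proof.
move=> step; apply/matrixP => i j; rewrite !mxE.
have -> : U i j = W i j - c * a * D i j - c * b * P i j * W i j
                  - c * b * G i j * P i j by rewrite step addrK.
ring.
Qed.

Lemma skew_real_update (C : numClosedFieldType) (n : nat) (U P P' : 'M[C]_n) :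
  U^t* = U -> P \is a realmx -> P^T = - P ->
  (forall i j, P' i j = 2 * (U i i - U j j) - P i j) ->
  P' \is a realmx /\ P'^T = - P'.
Proof.
move=> /matrixP UH /mxOverP Pr /matrixP Pskew P'E; split.
  apply/mxOverP => i j; rewrite P'E rpredB ?rpredM ?rpred_nat ?rpredB //.
    by apply/CrealP; have := UH i i; rewrite !mxE.
  by apply/CrealP; have := UH j j; rewrite !mxE.
apply/matrixP => i j; have := Pskew i j; rewrite !mxE !P'E => ->; ring.
Qed.

Section ZpIndex.
Variable n : nat.
Implicit Types i j k : 'I_n.+1.

Lemma eq_ord_modDn i k (s : nat) :
  (k == (i + s) %% n.+1 :> nat)%N = (k == i + inZp s).
Proof. by rewrite -val_eqE /= modnDmr. Qed.

Lemma inZp_subn (s : nat) : (s <= n.+1)%N -> inZp (n.+1 - s) = - inZp s :> 'I_n.+1.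
Proof.
move=> sN; apply: val_inj => /=; have [/modn_small-> //|Ns] := ltnP s n.+1.
have -> : s = n.+1 by apply/eqP; rewrite eqn_leq sN Ns.
by rewrite subnn modnn subn0 modnn.
Qed.

Lemma val_Zp_sub i j :
  val (i - j) = if (j <= i)%N then (i - j)%N else (i + n.+1 - j)%N.
Proof.
move: (ltn_ord i) (ltn_ord j) => ilt jlt /=; rewrite modnDmr; case: leqP => ji.
  have -> : (i + (n.+1 - j) = i - j + n.+1)%N by lia.
  by rewrite modnDr modn_small //; lia.
by rewrite modn_small; lia.
Qed.

End ZpIndex.

Local Open Scope complex_scope.

Definition CmatC {R : rcfType} (L : R) (N : nat) : 'M[R[i]]_N :=
  map_mx (real_complex R) (Cmat L N).

Section Grid.
Variables (R : rcfType) (L : R) (n : nat).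
Local Notation N := n.+1.

Lemma Cmat_sym : (0 < n)%N -> (Cmat L N)^T = Cmat L N.
Proof.
move=> n0; have shift (x y d : 'I_N) : (x == y - d) = (y == x + d).
  by rewrite eq_sym subr_eq.
apply/matrixP => i k; rewrite !mxE !eq_ord_modDn !inZp_subn // !shift.
by rewrite [(i : nat) == k]eq_sym; congr (_ / _); ring.
Qed.

Lemma Cmat_circulant : Cmat L N = circulant (fun d => Cmat L N d 0).
Proof.
have shift (x y d : 'I_N) : (y == x + d) = (0 == x - y + d).
  by rewrite [LHS]eq_sym [RHS]eq_sym -subr_eq0 addrAC.
apply/matrixP => i k; rewrite !mxE !eq_ord_modDn !val_eqE -!shift valZpK.
by rewrite [0 == _]eq_sym subr_eq0 [_ == k]eq_sym.
Qed.

Lemma CmatC_herm : (0 < n)%N -> (CmatC L N)^t* = CmatC L N.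
Proof.
move=> n0; rewrite /CmatC map_trmx Cmat_sym // -map_mx_comp.
by apply: eq_map_mx => x /=; apply: conjc_real.
Qed.

Lemma DH_ad_mx (U : 'M[R[i]]_N) : (0 < n)%N -> DH L N U = ad_mx (CmatC L N) U.
Proof.
move=> n0; have CT : (CmatC L N)^T = CmatC L N.
  by rewrite /CmatC map_trmx Cmat_sym.
rewrite /ad_mx -[in U *m _]CT; apply/matrixP => i j; rewrite !mxE.
by congr (_ - _); apply: eq_bigr => k _; rewrite !mxE // mulrC.
Qed.

Lemma I1_trace (U : 'M[R[i]]_N) : I1 L N U = (hstep L N)%:C * \tr U.
Proof. by []. Qed.

Variable Gamma : R -> R[i].

Lemma Gam_circulant : (forall xi, Gamma (xi + L) = Gamma xi) ->
  Gam L N Gamma = circulant (fun d => Gamma ((d : nat)%:R * hstep L N)).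
Proof.
move=> Gper; apply/matrixP => i j; rewrite !mxE val_Zp_sub /xgrid.
case: leqP => ji; first by congr Gamma; rewrite natrB //; ring.
rewrite -[LHS]Gper; congr Gamma.
rewrite natrB ?natrD; last by rewrite ltnW // ltn_addl.
by rewrite /hstep; field; rewrite addrC natr1 pnatr_eq0.
Qed.

Lemma ad_mx_Gam : (0 < n)%N -> (forall xi, Gamma (xi + L) = Gamma xi) ->
  ad_mx (CmatC L N) (Gam L N Gamma) = 0.
Proof.
move=> n0 Gper; rewrite /ad_mx /CmatC Cmat_circulant Gam_circulant //.
by rewrite map_circulant circulant_mulC subrr.
Qed.

Lemma Gam_herm : (forall xi, Gamma (- xi) = (Gamma xi)^*) ->
  (Gam L N Gamma)^t* = Gam L N Gamma.
Proof.
move=> Gconj; apply/matrixP => i j.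
by rewrite !mxE -[xgrid L N i - _]opprB Gconj.
Qed.

Lemma I0_frobenius (U : 'M[R[i]]_N) :
  I0 L N Gamma U =
  (hstep L N ^+ 2)%:C * frobenius (Gam L N Gamma + U) (Gam L N Gamma + U).
Proof.
congr (_ * _); apply: eq_bigr => i _; apply: eq_bigr => j _.
by rewrite !mxE.
Qed.

End Grid.

(* U n = U^n, Uh n = U^{n+1/2}, Phi n = Phi^{n-1/2} (so Phi 0 = Phi^{-1/2}). *)
Theorem proposition3p1 (R : rcfType) (L tau p q : R) (N : nat)
  (Gamma : R -> R[i]) (phi0 : 'M[R]_N)
  (U Uh Phi : nat -> 'M[R[i]]_N) :
  0 < L -> (5 <= N)%N -> 0 < tau ->
  (forall xi, Gamma (xi + L) = Gamma xi) ->
  (forall xi, Gamma (- xi) = (Gamma xi)^*) ->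
  (forall i j, U 0%N i j = (U 0%N j i)^*) ->
  (forall i j, phi0 i j = - phi0 j i) ->
  (forall i j, Phi 0%N i j = (phi0 i j)%:C) ->
  (forall n i j, Phi n.+1 i j = 2 * (U n i i - U n j j) - Phi n i j) ->
  (forall n i j,
     Uh n i j - 'i * (p * tau / 2)%:C * DH L N (Uh n) i j
       - 'i * (q * tau / 2)%:C * Phi n.+1 i j * Uh n i j
     = U n i j + 'i * (q * tau / 2)%:C * Gam L N Gamma i j * Phi n.+1 i j) ->
  (forall n i j, U n.+1 i j = 2 * Uh n i j - U n i j) ->
  forall n : nat,
    I0 L N Gamma (U n.+1) = I0 L N Gamma (U n) /\ I1 L N (U n.+1) = I1 L N (U n).
Proof.
case: N phi0 U Uh Phi => [|n] phi0 U Uh Phi _ N5 //.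
move=> _ Gper Gconj U0H phi0_skew Phi0E PhiE UhE UE; have n0 : (0 < n)%N by lia.
set a := (p * tau / 2)%:C; set b := (q * tau / 2)%:C; set G := Gam L n.+1 Gamma.
have [a_real b_real] : a \is Num.real /\ b \is Num.real.
  by split; apply/complex_realP; eexists.
have CH : (CmatC L n.+1)^t* = CmatC L n.+1 by apply: CmatC_herm.
pose T k := scheme_op a b (CmatC L n.+1) (Phi k.+1).
have step k : Uh k - U k = 'i *: T k (G + Uh k).
  rewrite /T /scheme_op ad_mxD ad_mx_Gam // add0r -DH_ad_mx //.
  exact: scheme_step_mx.
have next k : U k.+1 = Uh k *+ 2 - U k.
  by apply/matrixP => i j; rewrite UE !mxE; ring.
have inv k : (U k)^t* = U k /\ Phi k \is a realmx /\ (Phi k)^T = - Phi k.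
  elim: k => [|k [UH [Pr Ps]]].
    split; first by apply/matrixP => i j; rewrite !mxE [RHS]U0H.
    split; first by apply/mxOverP => i j; rewrite Phi0E; apply/complex_realP; eexists.
    by apply/matrixP => i j; rewrite !mxE !Phi0E phi0_skew raddfN.
  have [Pr' Ps'] := skew_real_update UH Pr Ps (PhiE k); split => //.
  apply: (cn_step_hermitian (step k) (next k)) UH.
  - exact: scheme_op_selfadjoint.
  - exact: scheme_opB.
  - exact: trmxC_scheme_op.
  - exact: Gam_herm.
move=> k; have [_ [Pr Ps]] := inv k.+1; split.
  rewrite !I0_frobenius (cn_step_frobenius (step k) (next k)) //.
  exact: scheme_op_selfadjoint.
rewrite !I1_trace (cn_step_trace (step k) (next k)) // => X.
exact: mxtrace_scheme_op.
Qed.
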